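(* Let $c,a,b\in V$ with $c=a+b$. The following three statements are equivalent: (1) $c=a+b$ is an $X2$-decomposition; (2) $c=a+b$ is a $2Y$-decomposition; (3) $\langle a,b\rangle=\|a\|_X\|b\|_Y$.
   Context: $V$ is a finite dimensional real vector space with a positive definite symmetric bilinear form $\langle\cdot,\cdot\rangle$ and euclidean norm $\|v\|_2=\sqrt{\langle v,v\rangle}$. $\|\cdot\|_X$ is a norm on $V$ and $\|\cdot\|_Y$ is its dual norm, $\|v\|_Y=\max\{\langle v,w\rangle : w\in V,\ \|w\|_X=1\}$. For two norms $\|\cdot\|_P,\|\cdot\|_Q$ on $V$ (each one of $X$, $Y$, $2$), a decomposition $c=a+b$ is called a $PQ$-decomposition if for every decomposition $c=a'+b'$ we have $\|a'\|_P>\|a\|_P$, or $\|b'\|_Q>\|b\|_Q$, or $(\|a'\|_P,\|b'\|_Q)=(\|a\|_P,\|b\|_Q)$. *)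

(* real vector space V = R^n (functions Fin.t n -> R),
   carrying an ARBITRARY positive definite symmetric bilinear form. *)
From Stdlib Require Import Reals.
From Stdlib Require Fin.
Open Scope R_scope.

Definition vec (n : nat) := Fin.t n -> R.
Definition vzero {n} : vec n := fun _ => 0.
Definition vadd {n} (u v : vec n) : vec n := fun i => u i + v i.
Definition vscal {n} (r : R) (u : vec n) : vec n := fun i => r * u i.

Definition is_inner_product {n} (ip : vec n -> vec n -> R) : Prop :=
  (forall u v, ip u v = ip v u) /\
  (forall u v w, ip (vadd u v) w = ip u w + ip v w) /\
  (forall r u w, ip (vscal r u) w = r * ip u w) /\
  (forall v, v <> vzero -> 0 < ip v v).

Definition euclid {n} (ip : vec n -> vec n -> R) (v : vec n) : R :=
  sqrt (ip v v).

Definition is_norm {n} (N : vec n -> R) : Prop :=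
  (forall v, N v = 0 -> v = vzero) /\
  (forall r v, N (vscal r v) = Rabs r * N v) /\
  (forall u v, N (vadd u v) <= N u + N v).

Definition is_dual_norm {n} (ip : vec n -> vec n -> R) (X Y : vec n -> R) : Prop :=
  forall v,
    (exists w, X w = 1 /\ ip v w = Y v) /\
    (forall w, X w = 1 -> ip v w <= Y v).

Definition is_PQ_decomposition {n} (P Q : vec n -> R) (c a b : vec n) : Prop :=
  c = vadd a b /\
  forall a' b', c = vadd a' b' ->
    P a' > P a \/ Q b' > Q b \/ (P a' = P a /\ Q b' = Q b).

(* The implications (3) => (1) and (3) => (2) say that a perturbation a + d, b - d
   which does not increase either norm must have d = 0: by the generalised
   Cauchy-Schwarz inequality <u, v> <= ||u||_X ||v||_Y the cross term <b, d>
   (resp. <a, d>) has the right sign, so ||d||_2^2 <= 0.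
   For the converses, if <a, b> < ||a||_X ||b||_Y one moves a small step t u
   from one summand to the other along a direction u with <b, u> > 0 (resp.
   <a, u> > 0): the euclidean summand strictly shrinks and, by convexity, the
   other norm does not grow. For (1) the direction comes from a vector w
   attaining ||b||_Y. For (2) it requires ||a||_X = sup { <a, v> : ||v||_Y <= 1 },
   i.e. that X is the dual of Y; this is obtained by strictly separating a from
   the unit ball of X through an approximate nearest point of the ball, which
   uses that all norms are equivalent to ||.||_2 (via a Gram-Schmidt basis). *)
From Stdlib Require Import Reals Lra Psatz List FunctionalExtensionality Classical.
Open Scope R_scope.

Local Notation vsub u w := (vadd u (vscal (-1) w)).

Local Ltac vext := let i := fresh "i" in extensionality i; unfold vadd, vscal, vzero.

Lemma exists_inf {T : Type} (A : T -> Prop) (f : T -> R) :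
  (exists w, A w) -> (forall w, A w -> 0 <= f w) ->
  exists m, (forall w, A w -> m <= f w) /\
            (forall eps, 0 < eps -> exists w, A w /\ f w < m + eps).
Proof.
  intros [w0 Hw0] Hpos.
  set (E := fun s => exists w, A w /\ s = - f w).
  destruct (completeness E) as [l [Hub Hleast]].
  - exists 0. intros s (w & Hw & ->). specialize (Hpos w Hw). lra.
  - exists (- f w0), w0. auto.
  - exists (- l). split.
    + intros w Hw. enough (- f w <= l) by lra. apply Hub. exists w; auto.
    + intros eps Heps. apply NNPP. intro Hnot.
      enough (l <= l - eps) by lra. apply Hleast. intros s (w & Hw & ->).
      destruct (Rlt_or_le (f w) (- l + eps)); [exfalso; eauto | lra].
Qed.

Fixpoint fin_enum (n : nat) : list (Fin.t n) :=
  match n with 0 => nil | S m => Fin.F1 :: map Fin.FS (fin_enum m) end.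

Lemma In_fin_enum n (i : Fin.t n) : In i (fin_enum n).
Proof. induction i; simpl; [left | right; apply in_map]; auto. Qed.

Section Vectors.
Variable n : nat.
Implicit Types u v w x y : vec n.

Fixpoint in_span (L : list (vec n)) x : Prop :=
  match L with
  | nil => x = vzero
  | l :: L' => exists c y, in_span L' y /\ x = vadd (vscal c l) y
  end.

Definition ebasis (i : Fin.t n) : vec n := fun j => if Fin.eq_dec j i then 1 else 0.

Lemma in_span_ebasis (I : list (Fin.t n)) x :
  (forall j, ~ In j I -> x j = 0) -> in_span (map ebasis I) x.
Proof.
  revert x. induction I as [|i I IH]; intros x Hx; simpl.
  - vext. apply Hx. auto.
  - exists (x i), (fun j => if Fin.eq_dec j i then 0 else x j). split.
    + apply IH. intros j Hj. destruct (Fin.eq_dec j i); auto.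
      apply Hx. simpl. intros [E|E]; auto.
    + vext. unfold ebasis. destruct (Fin.eq_dec i0 i); [subst; ring | ring].
Qed.

Lemma exists_spanning_list : exists L, forall x, in_span L x.
Proof.
  exists (map ebasis (fin_enum n)). intro x. apply in_span_ebasis.
  intros j Hj. exfalso. apply Hj, In_fin_enum.
Qed.

Definition sublinear (p : vec n -> R) : Prop :=
  forall s t u v, 0 <= s -> 0 <= t ->
    p (vadd (vscal s u) (vscal t v)) <= s * p u + t * p v.

Section Sublinear.
Variable p : vec n -> R.
Hypothesis hp : sublinear p.

Lemma sublinear_add u v : p (vadd u v) <= p u + p v.
Proof.
  replace (vadd u v) with (vadd (vscal 1 u) (vscal 1 v)) by (vext; ring).
  specialize (hp 1 1 u v). lra.
Qed.

Lemma sublinear_scal s u : 0 <= s -> p (vscal s u) <= s * p u.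
Proof.
  intro Hs. replace (vscal s u) with (vadd (vscal s u) (vscal 0 u)) by (vext; ring).
  specialize (hp s 0 u u Hs (Rle_refl 0)). lra.
Qed.

Lemma sublinear_zero : p vzero <= 0.
Proof.
  replace vzero with (vscal 0 (@vzero n)) by (vext; ring).
  pose proof (sublinear_scal 0 vzero (Rle_refl 0)). lra.
Qed.

Lemma sublinear_scal_abs c u :
  p (vscal c u) <= Rabs c * (Rabs (p u) + Rabs (p (vscal (-1) u))).
Proof.
  destruct (Rle_or_lt 0 c) as [Hc|Hc].
  - rewrite Rabs_pos_eq by lra. pose proof (sublinear_scal c u Hc).
    pose proof (Rle_abs (p u)). pose proof (Rabs_pos (p (vscal (-1) u))). nra.
  - rewrite Rabs_left by lra.
    replace (vscal c u) with (vscal (- c) (vscal (-1) u)) by (vext; ring).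
    pose proof (sublinear_scal (- c) (vscal (-1) u) ltac:(lra)).
    pose proof (Rle_abs (p (vscal (-1) u))). pose proof (Rabs_pos (p u)). nra.
Qed.

End Sublinear.

Lemma PQ_decomposition_of_rigid (P Q : vec n -> R) a b :
  (forall d, P (vadd a d) <= P a -> Q (vsub b d) <= Q b -> d = vzero) ->
  is_PQ_decomposition P Q (vadd a b) a b.
Proof.
  intro Hrigid. split; [reflexivity|]. intros a' b' Hc.
  destruct (Rlt_or_le (P a) (P a')) as [|HP]; [left; lra|].
  destruct (Rlt_or_le (Q b) (Q b')) as [|HQ]; [right; left; lra|].
  right; right.
  assert (Ea : a' = vadd a (vsub a' a)) by (vext; ring).
  assert (Eb : b' = vsub b (vsub a' a)).
  { vext. pose proof (equal_f Hc i) as Hi. unfold vadd in Hi. lra. }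
  assert (Hd : vsub a' a = vzero)
    by (apply Hrigid; [rewrite <- Ea | rewrite <- Eb]; assumption).
  rewrite Hd in Ea, Eb.
  replace (vadd a vzero) with a in Ea by (vext; ring).
  replace (vsub b vzero) with b in Eb by (vext; ring).
  subst. split; reflexivity.
Qed.

Lemma PQ_decomposition_min (P Q : vec n -> R) c a b a' b' :
  is_PQ_decomposition P Q c a b -> c = vadd a' b' -> P a' <= P a -> Q b' <= Q b ->
  P a' = P a /\ Q b' = Q b.
Proof. intros [_ Hmin] Hc HP HQ. destruct (Hmin a' b' Hc) as [|[|]]; [lra | lra | auto]. Qed.

Section InnerProduct.
Variable ip : vec n -> vec n -> R.
Hypothesis hip : is_inner_product ip.

Lemma ip_sym u v : ip u v = ip v u.
Proof. apply hip. Qed.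

Lemma ip_addl u v w : ip (vadd u v) w = ip u w + ip v w.
Proof. apply hip. Qed.

Lemma ip_scall r u w : ip (vscal r u) w = r * ip u w.
Proof. apply hip. Qed.

Lemma ip_addr u v w : ip w (vadd u v) = ip w u + ip w v.
Proof. rewrite !(ip_sym w). apply ip_addl. Qed.

Lemma ip_scalr r u w : ip w (vscal r u) = r * ip w u.
Proof. rewrite !(ip_sym w). apply ip_scall. Qed.

Lemma ip_zerol w : ip vzero w = 0.
Proof.
  replace vzero with (vscal 0 (@vzero n)) by (vext; ring).
  rewrite ip_scall. ring.
Qed.

Lemma ip_zeror w : ip w vzero = 0.
Proof. rewrite ip_sym. apply ip_zerol. Qed.

Lemma ip_ge0 v : 0 <= ip v v.
Proof.
  destruct (classic (v = vzero)) as [->|Hv].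
  - rewrite ip_zerol. lra.
  - left. apply hip, Hv.
Qed.

Lemma ip_le0_eq0 v : ip v v <= 0 -> v = vzero.
Proof.
  intro Hle. apply NNPP. intro Hv. pose proof (proj2 (proj2 (proj2 hip)) v Hv). lra.
Qed.

Lemma ip_expand u w t :
  ip (vadd u (vscal t w)) (vadd u (vscal t w)) = ip u u + 2 * t * ip u w + t * t * ip w w.
Proof. rewrite ip_addl, !ip_addr, !ip_scall, !ip_scalr, (ip_sym w u). ring. Qed.

Lemma euclid_sqr v : euclid ip v * euclid ip v = ip v v.
Proof. apply sqrt_sqrt, ip_ge0. Qed.

Lemma euclid_le_iff u v : euclid ip u <= euclid ip v <-> ip u u <= ip v v.
Proof.
  split; intro H.
  - apply sqrt_le_0; auto using ip_ge0.
  - apply sqrt_le_1_alt, H.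
Qed.

Lemma unit_coef_abs_le x o : ip o o = 1 -> Rabs (ip x o) <= euclid ip x.
Proof.
  intro Ho. pose proof (ip_ge0 (vadd x (vscal (- ip x o) o))) as H.
  rewrite ip_expand, Ho in H.
  assert (ip x o * ip x o <= euclid ip x * euclid ip x) by (rewrite euclid_sqr; nra).
  rewrite <- (Rabs_pos_eq (euclid ip x)) by apply sqrt_pos.
  apply Rsqr_le_abs_0. unfold Rsqr. lra.
Qed.

(* Shortening [b] along [u] with [<b, u> > 0]: the step [t = s / (s + |u|^2)] has [t |u|^2 < s]. *)
Lemma ip_descent b u : 0 < ip b u ->
  exists t, 0 < t <= 1 /\ ip (vadd b (vscal (- t) u)) (vadd b (vscal (- t) u)) < ip b b.
Proof.
  intro Hs. pose proof (ip_ge0 u) as Hq.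
  set (s := ip b u) in *. set (q := ip u u) in *.
  exists (s / (s + q)).
  assert (Ht : s / (s + q) * (s + q) = s) by (field; lra).
  assert (0 < s / (s + q)) by (apply Rdiv_lt_0_compat; lra).
  rewrite ip_expand. fold s q.
  assert (s / (s + q) * q < s) by nra.
  split; [split|]; nra.
Qed.

Fixpoint proj (O : list (vec n)) x : vec n :=
  match O with nil => vzero | o :: O' => vadd (vscal (ip x o) o) (proj O' x) end.

Fixpoint orthonormal (O : list (vec n)) : Prop :=
  match O with
  | nil => True
  | o :: O' => ip o o = 1 /\ (forall o', In o' O' -> ip o o' = 0) /\ orthonormal O'
  end.

Lemma orthonormal_unit O o : orthonormal O -> In o O -> ip o o = 1.
Proof. induction O; simpl; [tauto|]. intros (H1 & _ & H3) [<-|Hi]; auto. Qed.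

Lemma ip_projl O x z : (forall o, In o O -> ip o z = 0) -> ip (proj O x) z = 0.
Proof.
  induction O as [|o O IH]; intro Hz; simpl.
  - apply ip_zerol.
  - rewrite ip_addl, ip_scall, Hz by (left; reflexivity).
    rewrite IH by (intros; apply Hz; right; auto). ring.
Qed.

Lemma proj_lin O c l y : proj O (vadd (vscal c l) y) = vadd (vscal c (proj O l)) (proj O y).
Proof.
  induction O as [|o O IH]; simpl.
  - vext. ring.
  - rewrite IH, ip_addl, ip_scall. vext. ring.
Qed.

Lemma ip_residual_orth O l o : orthonormal O -> In o O -> ip (vsub l (proj O l)) o = 0.
Proof.
  rewrite ip_addl, ip_scall.
  induction O as [|o1 O IH]; [contradiction|]. intros (H1 & H2 & H3) [<-|Ho]; simpl.
  - rewrite ip_addl, ip_scall, H1, ip_projl; [ring|].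
    intros o' Ho'. rewrite ip_sym. auto.
  - rewrite ip_addl, ip_scall, (ip_sym o1 o), (ip_sym o o1), H2 by auto.
    specialize (IH H3 Ho). lra.
Qed.

Lemma gram_schmidt L : exists O, orthonormal O /\ forall x, in_span L x -> proj O x = x.
Proof.
  induction L as [|l L [O [HO HP]]].
  - exists nil. split; [exact I|]. intros x Hx. simpl in Hx. now subst.
  - set (r := vsub l (proj O l)).
    assert (Hro : forall o, In o O -> ip r o = 0) by (intros; apply ip_residual_orth; auto).
    destruct (classic (r = vzero)) as [Hr|Hr].
    + exists O. split; auto. intros x (c & y & Hy & ->).
      rewrite proj_lin, (HP y Hy).
      replace (proj O l) with l; [reflexivity|].
      vext. pose proof (equal_f Hr i) as Hi. unfold r, vadd, vscal, vzero in Hi. lra.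
    + assert (Hpos : 0 < ip r r) by (apply hip, Hr).
      set (s := / sqrt (ip r r)).
      assert (Hs : s * s * ip r r = 1).
      { unfold s. rewrite <- Rinv_mult, sqrt_sqrt by lra. field. lra. }
      set (o := vscal s r).
      assert (Hoo : forall o', In o' O -> ip o' o = 0).
      { intros o' Ho'. unfold o. rewrite ip_scalr, ip_sym, Hro by auto. ring. }
      exists (o :: O). split.
      * simpl. split; [|split; auto].
        -- unfold o. rewrite ip_scall, ip_scalr. lra.
        -- intros o' Ho'. rewrite ip_sym. auto.
      * intros x (c & y & Hy & ->). simpl.
        rewrite proj_lin, (HP y Hy).
        assert (Hyo : ip y o = 0) by (rewrite <- (HP y Hy); apply ip_projl, Hoo).
        assert (Hlo : ip l o = s * ip r r).
        { replace l with (vadd r (vscal 1 (proj O l))) at 1 by (unfold r; vext; ring).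
          rewrite ip_addl, ip_scall, ip_projl by exact Hoo. unfold o. rewrite ip_scalr. ring. }
        rewrite ip_addl, ip_scall, Hyo, Hlo.
        unfold o, r. vext.
        transitivity (c * (s * s * ip r r) * (l i - proj O l i) + (c * proj O l i + y i)).
        { unfold r, vadd, vscal. ring. }
        rewrite Hs. ring.
Qed.

Lemma orthonormal_basis : exists O, (forall o, In o O -> ip o o = 1) /\ forall x, proj O x = x.
Proof.
  destruct exists_spanning_list as [L HL]. destruct (gram_schmidt L) as [O [HO HP]].
  exists O. split; eauto using orthonormal_unit.
Qed.

Lemma sublinear_proj_le_euclid p O : sublinear p -> (forall o, In o O -> ip o o = 1) ->
  exists S, forall x, p (proj O x) <= S * euclid ip x.
Proof.
  intro hp. induction O as [|o O IH]; intro Hunit; simpl.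
  - exists 0. intro x. pose proof (sublinear_zero p hp). lra.
  - destruct IH as [S HS]; [intros; apply Hunit; simpl; auto|].
    exists (Rabs (p o) + Rabs (p (vscal (-1) o)) + S). intro x.
    pose proof (sublinear_add p hp (vscal (ip x o) o) (proj O x)).
    pose proof (sublinear_scal_abs p hp (ip x o) o).
    pose proof (unit_coef_abs_le x o (Hunit o (or_introl eq_refl))).
    assert (0 <= Rabs (p o) + Rabs (p (vscal (-1) o)))
      by (pose proof (Rabs_pos (p o)); pose proof (Rabs_pos (p (vscal (-1) o))); lra).
    specialize (HS x). set (M := Rabs (p o) + Rabs (p (vscal (-1) o))) in *.
    assert (Rabs (ip x o) * M <= euclid ip x * M) by (apply Rmult_le_compat_r; lra).
    lra.
Qed.

Lemma sublinear_le_euclid p : sublinear p -> exists S, forall x, p x <= S * euclid ip x.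
Proof.
  intro hp. destruct orthonormal_basis as [O [Hunit Hproj]].
  destruct (sublinear_proj_le_euclid p O hp Hunit) as [S HS].
  exists S. intro x. rewrite <- (Hproj x) at 1. apply HS.
Qed.

(* Through an approximate nearest point [q] of [B] to [a]: moving [q] a fixed fraction [t]
   towards any [w] in [B] cannot bring it closer to [a] than the infimum [d]. *)
Lemma strict_separation (B : vec n -> Prop) K delta a :
  (exists w, B w) ->
  (forall u w t, B u -> B w -> 0 <= t <= 1 -> B (vadd u (vscal t (vsub w u)))) ->
  (forall w, B w -> ip w w <= K) ->
  0 < delta -> (forall w, B w -> delta <= ip (vsub a w) (vsub a w)) ->
  exists v, forall w, B w -> ip v w < ip v a.
Proof.
  intros [w0 Hw0] Hconv HK Hdelta Hdist.
  assert (HK0 : 0 <= K) by (pose proof (ip_ge0 w0); pose proof (HK w0 Hw0); lra).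
  destruct (exists_inf B (fun w => ip (vsub a w) (vsub a w)) (ex_intro _ w0 Hw0)
              (fun w _ => ip_ge0 _)) as [d [Hd Happrox]].
  assert (Hdpos : 0 < d).
  { apply Rnot_le_lt. intro. destruct (Happrox (delta - d)) as [w [Hw Hlt]]; [lra|].
    specialize (Hdist w Hw). lra. }
  set (t := d / (d + 4 * K)).
  assert (Ht : t * (d + 4 * K) = d) by (unfold t; field; lra).
  assert (Htpos : 0 < t) by (apply Rdiv_lt_0_compat; lra).
  destruct (Happrox (t * d)) as [q [Hq Hqd]]; [nra|].
  exists (vsub a q). intros w Hw.
  set (v := vsub a q) in *. set (z := vsub w q).
  assert (Hstep : d <= ip (vadd v (vscal (- t) z)) (vadd v (vscal (- t) z))).
  { replace (vadd v (vscal (- t) z)) with (vsub a (vadd q (vscal t (vsub w q))))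
      by (unfold v, z; vext; ring).
    apply Hd, Hconv; auto. nra. }
  rewrite ip_expand in Hstep.
  assert (Hzz : ip z z <= 4 * K).
  { pose proof (ip_ge0 (vadd w (vscal 1 q))). unfold z. rewrite ip_expand in *.
    pose proof (HK w Hw). pose proof (HK q Hq). nra. }
  assert (Hvz : ip v z < d) by nra.
  assert (Ev : ip v v = ip v a - ip v q)
    by (unfold v at 2; rewrite ip_addr, ip_scalr; ring).
  replace w with (vadd q (vscal 1 z)) by (unfold z; vext; ring).
  rewrite ip_addr, ip_scalr.
  assert (Hdq : d <= ip v v) by apply (Hd q Hq). lra.
Qed.

Section Norms.
Variables X Y : vec n -> R.
Hypothesis hX : is_norm X.
Hypothesis hY : is_dual_norm ip X Y.

Lemma norm_zero : X vzero = 0.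
Proof.
  replace vzero with (vscal 0 (@vzero n)) by (vext; ring).
  rewrite (proj1 (proj2 hX)), Rabs_R0. ring.
Qed.

Lemma norm_sublinear : sublinear X.
Proof.
  intros s t u v Hs Ht. destruct hX as (_ & Hscal & Htri).
  eapply Rle_trans; [apply Htri|]. rewrite !Hscal, !Rabs_pos_eq by lra. lra.
Qed.

Lemma norm_ge0 v : 0 <= X v.
Proof.
  pose proof (sublinear_add X norm_sublinear v (vscal (-1) v)) as Hle.
  replace (vadd v (vscal (-1) v)) with (@vzero n) in Hle by (vext; ring).
  rewrite norm_zero, (proj1 (proj2 hX)), (Rabs_left (-1)) in Hle by lra. lra.
Qed.

Lemma ip_le_norm_dual v w : ip v w <= X w * Y v.
Proof.
  destruct (classic (w = vzero)) as [->|Hw].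
  - rewrite ip_zeror, norm_zero. lra.
  - assert (Hpos : 0 < X w).
    { destruct (Rle_lt_or_eq_dec _ _ (norm_ge0 w)) as [|E]; auto.
      exfalso. apply Hw, hX. auto. }
    assert (Hunit : X (vscal (/ X w) w) = 1).
    { rewrite (proj1 (proj2 hX)), Rabs_pos_eq by (left; apply Rinv_0_lt_compat, Hpos).
      field. lra. }
    pose proof (proj2 (hY v) _ Hunit) as Hle. rewrite ip_scalr in Hle.
    apply Rmult_le_compat_l with (r := X w) in Hle; [|lra].
    rewrite <- Rmult_assoc, Rinv_r in Hle; lra.
Qed.

Lemma dual_ge0 v : 0 <= Y v.
Proof.
  destruct (hY v) as [[w [Hw _]] _].
  pose proof (ip_le_norm_dual v w). pose proof (ip_le_norm_dual v (vscal (-1) w)).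
  rewrite ip_scalr, (proj1 (proj2 hX)), (Rabs_left (-1)) in * by lra. rewrite Hw in *. lra.
Qed.

Lemma dual_sublinear : sublinear Y.
Proof.
  intros s t u v Hs Ht. destruct (hY (vadd (vscal s u) (vscal t v))) as [[w [Hw <-]] _].
  rewrite ip_addl, !ip_scall.
  pose proof (proj2 (hY u) w Hw). pose proof (proj2 (hY v) w Hw). nra.
Qed.

(* [|w|^2 <= X w * Y w <= Y w <= S |w|] on the unit ball of [X]. *)
Lemma norm_ball_bounded : exists K, forall w, X w <= 1 -> ip w w <= K.
Proof.
  destruct (sublinear_le_euclid Y dual_sublinear) as [S HS].
  exists (S * S). intros w Hw.
  pose proof (ip_le_norm_dual w w). pose proof (dual_ge0 w). pose proof (HS w).
  pose proof (euclid_sqr w) as Hsq. pose proof (sqrt_pos (ip w w)).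
  fold (euclid ip w) in *. set (e := euclid ip w) in *.
  assert (Hle : e * e <= S * e) by nra.
  destruct (Rle_lt_or_eq_dec 0 e) as [He|He]; [lra| |subst; nra].
  assert (e <= S) by (apply Rmult_le_reg_r with e; lra). nra.
Qed.

Lemma norm_ball_separation a : 1 < X a -> exists v, forall w, X w <= 1 -> ip v w < ip v a.
Proof.
  intro Ha. destruct norm_ball_bounded as [K HK].
  destruct (sublinear_le_euclid X norm_sublinear) as [S HS].
  assert (HSpos : 0 < S) by (pose proof (HS a); pose proof (sqrt_pos (ip a a)); unfold euclid in *; nra).
  apply (strict_separation (fun w => X w <= 1) K (((X a - 1) / S) ^ 2)).
  - exists vzero. rewrite norm_zero. lra.
  - intros u w t Hu Hw Ht.
    replace (vadd u (vscal t (vsub w u))) with (vadd (vscal (1 - t) u) (vscal t w))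
      by (vext; ring).
    pose proof (norm_sublinear (1 - t) t u w ltac:(lra) ltac:(lra)). nra.
  - exact HK.
  - apply pow_lt, Rdiv_lt_0_compat; lra.
  - intros w Hw.
    pose proof (sublinear_add X norm_sublinear (vsub a w) w) as Htri.
    replace (vadd (vsub a w) w) with a in Htri by (vext; ring).
    pose proof (HS (vsub a w)). pose proof (euclid_sqr (vsub a w)).
    assert (Hle : (X a - 1) / S <= euclid ip (vsub a w)).
    { apply Rmult_le_reg_r with S; [lra|]. unfold Rdiv.
      rewrite Rmult_assoc, Rinv_l by lra. lra. }
    assert (0 <= (X a - 1) / S) by (unfold Rdiv; apply Rmult_le_pos; [lra | left; apply Rinv_0_lt_compat, HSpos]). nra.
Qed.

Lemma bidual_approx a (y r : R) : 0 <= y -> r < X a * y -> exists v, Y v <= y /\ r < ip a v.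
Proof.
  intros Hy Hr. destruct (Rlt_or_le r 0) as [Hneg|Hnneg].
  { exists vzero. rewrite ip_zeror. pose proof (sublinear_zero Y dual_sublinear). lra. }
  pose proof (norm_ge0 a).
  set (k := 2 * y / (r + X a * y)).
  assert (Hk : k * (r + X a * y) = 2 * y) by (unfold k; field; nra).
  assert (Hkpos : 0 < k) by (apply Rdiv_lt_0_compat; nra).
  destruct (norm_ball_separation (vscal k a)) as [v Hv].
  { rewrite (proj1 (proj2 hX)), Rabs_pos_eq by lra. nra. }
  destruct (hY v) as [[w [Hw Hvw]] _].
  specialize (Hv w ltac:(lra)). rewrite ip_scalr, (ip_sym v a), Hvw in Hv.
  pose proof (dual_ge0 v).
  set (m := ip a v) in *.
  assert (Hm : 0 < m) by nra.
  exists (vscal (y / (k * m)) v). split.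
  - eapply Rle_trans; [apply (sublinear_scal Y dual_sublinear)|].
    + left; apply Rdiv_lt_0_compat; nra.
    + apply Rmult_le_reg_r with (k * m); [nra|]. unfold Rdiv.
      replace (y * / (k * m) * Y v * (k * m)) with (y * Y v * ((k * m) * / (k * m))) by ring.
      rewrite Rinv_r by nra. nra.
  - rewrite ip_scalr. fold m.
    replace (y / (k * m) * m) with (y / k) by (field; lra).
    apply Rmult_lt_reg_r with k; [lra|]. unfold Rdiv. rewrite Rmult_assoc, Rinv_l by lra. nra.
Qed.

Lemma Xeuclid_decomposition_of_ip_eq a b : ip a b = X a * Y b ->
  is_PQ_decomposition X (euclid ip) (vadd a b) a b.
Proof.
  intro Heq. apply PQ_decomposition_of_rigid. intros d Ha Hb.
  apply euclid_le_iff in Hb. rewrite ip_expand in Hb.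
  assert (Hbd : ip b d <= 0).
  { pose proof (ip_le_norm_dual b (vadd a d)) as Hle.
    rewrite ip_addr, (ip_sym b a), Heq in Hle. pose proof (dual_ge0 b). nra. }
  apply ip_le0_eq0. nra.
Qed.

Lemma euclidY_decomposition_of_ip_eq a b : ip a b = X a * Y b ->
  is_PQ_decomposition (euclid ip) Y (vadd a b) a b.
Proof.
  intro Heq. apply PQ_decomposition_of_rigid. intros d Ha Hb.
  replace (vadd a d) with (vadd a (vscal 1 d)) in Ha by (vext; ring).
  apply euclid_le_iff in Ha. rewrite ip_expand in Ha.
  assert (Had : 0 <= ip a d).
  { pose proof (ip_le_norm_dual (vsub b d) a) as Hle.
    rewrite ip_addl, ip_scall, !(ip_sym _ a), Heq in Hle. pose proof (norm_ge0 a). nra. }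
  apply ip_le0_eq0. nra.
Qed.

Lemma ip_eq_of_Xeuclid_decomposition c a b :
  is_PQ_decomposition X (euclid ip) c a b -> ip a b = X a * Y b.
Proof.
  intro Hdec. pose proof (ip_le_norm_dual b a) as Hle. rewrite ip_sym in Hle.
  destruct (Rle_lt_or_eq_dec _ _ Hle) as [Hlt|]; auto. exfalso.
  destruct (hY b) as [[w [Hw Hbw]] _].
  set (u := vsub (vscal (X a) w) a).
  destruct (ip_descent b u) as (t & Ht & Hshort).
  { unfold u. rewrite ip_addr, !ip_scalr, Hbw, (ip_sym b a). lra. }
  assert (Ha' : X (vadd a (vscal t u)) <= X a).
  { replace (vadd a (vscal t u)) with (vadd (vscal (1 - t) a) (vscal (t * X a) w))
      by (unfold u; vext; ring).
    pose proof (norm_ge0 a).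
    pose proof (norm_sublinear (1 - t) (t * X a) a w ltac:(lra) ltac:(nra)). nra. }
  destruct (PQ_decomposition_min _ _ c a b (vadd a (vscal t u)) (vadd b (vscal (- t) u)) Hdec)
    as [_ Hb].
  - destruct Hdec as [-> _]. vext. ring.
  - exact Ha'.
  - apply euclid_le_iff. lra.
  - assert (ip b b <= ip (vadd b (vscal (- t) u)) (vadd b (vscal (- t) u)))
      by (apply euclid_le_iff; lra).
    lra.
Qed.

Lemma ip_eq_of_euclidY_decomposition c a b :
  is_PQ_decomposition (euclid ip) Y c a b -> ip a b = X a * Y b.
Proof.
  intro Hdec. pose proof (ip_le_norm_dual b a) as Hle. rewrite ip_sym in Hle.
  destruct (Rle_lt_or_eq_dec _ _ Hle) as [Hlt|]; auto. exfalso.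
  destruct (bidual_approx a (Y b) (ip a b) (dual_ge0 b) Hlt) as [v [Hv Hav]].
  set (u := vsub v b).
  destruct (ip_descent a u) as (t & Ht & Hshort).
  { unfold u. rewrite ip_addr, ip_scalr. lra. }
  assert (Hb' : Y (vadd b (vscal t u)) <= Y b).
  { replace (vadd b (vscal t u)) with (vadd (vscal (1 - t) b) (vscal t v))
      by (unfold u; vext; ring).
    pose proof (dual_ge0 b).
    pose proof (dual_sublinear (1 - t) t b v ltac:(lra) ltac:(lra)). nra. }
  destruct (PQ_decomposition_min _ _ c a b (vadd a (vscal (- t) u)) (vadd b (vscal t u)) Hdec)
    as [Ha _].
  - destruct Hdec as [-> _]. vext. ring.
  - apply euclid_le_iff. lra.
  - exact Hb'.
  - assert (ip a a <= ip (vadd a (vscal (- t) u)) (vadd a (vscal (- t) u)))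
      by (apply euclid_le_iff; lra).
    lra.
Qed.

End Norms.
End InnerProduct.
End Vectors.

Theorem proposition2p2 (n : nat) (ip : vec n -> vec n -> R)
  (X Y : vec n -> R)
  (hip : is_inner_product ip) (hX : is_norm X) (hY : is_dual_norm ip X Y)
  (c a b : vec n) (hc : c = vadd a b) :
  (is_PQ_decomposition X (euclid ip) c a b <->
     is_PQ_decomposition (euclid ip) Y c a b) /\
  (is_PQ_decomposition (euclid ip) Y c a b <->
     ip a b = X a * Y b).
Proof.
  subst c.
  pose proof (Xeuclid_decomposition_of_ip_eq n ip hip X Y hX hY a b) as H31.
  pose proof (euclidY_decomposition_of_ip_eq n ip hip X Y hX hY a b) as H32.
  pose proof (ip_eq_of_Xeuclid_decomposition n ip hip X Y hX hY (vadd a b) a b) as H13.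
  pose proof (ip_eq_of_euclidY_decomposition n ip hip X Y hX hY (vadd a b) a b) as H23.
  tauto.
Qed.
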